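(* Let $m,n\ge1$ and $k$ be integers with $k^n\equiv1\pmod m$, let $G=\langle a,b\mid a^m=b^n=1,\ b^{-1}ab=a^k\rangle$, let $t=|k|_m$ and $n=rt$. Let $s$ be a prime with $\gcd(s,m)=1$, $\zeta$ a primitive $m$-th root of unity in $\overline{\mathbb{F}}_s$, and $q$ a power of $s$ with $q\equiv k^j\pmod m$ for some $j$. Assume $F=\mathbb{F}_q$ contains a primitive $r$-th root of unity $\eta$. Then for every integer $c$, the $t$-dimensional representation of $G$ over $\overline{\mathbb{F}}_s$ given by $$a\mapsto\mathrm{diag}(\zeta,\zeta^k,\dots,\zeta^{k^{t-1}}),$$ $$b\mapsto\text{the } t\times t \text{ matrix with entries } 1 \text{ in positions } (i+1,i) \ (1\le i\le t-1),\ \eta^c \text{ in position } (1,t),\ 0 \text{ elsewhere},$$ is realizable over $F$.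
   Context: $|k|_m$ denotes the multiplicative order of $k$ modulo $m$. A representation over $\overline{\mathbb{F}}_s$ is realizable over $\mathbb{F}_q$ if it is equivalent (over $\overline{\mathbb{F}}_s$) to a matrix representation with all matrix entries in $\mathbb{F}_q$. *)

From HB Require Import structures.
From mathcomp Require Import all_boot all_order all_algebra all_field.
Set Implicit Arguments. Unset Strict Implicit. Unset Printing Implicit Defensive.
Import Order.TTheory GRing.Theory Num.Theory.
Local Open Scope ring_scope.

Definition is_mult_order (k : int) (m t : nat) : Prop :=
  (0 < t)%N /\ (k ^+ t == 1 %[mod m%:Z])%Z /\
  (forall u : nat, (0 < u < t)%N -> ~~ (k ^+ u == 1 %[mod m%:Z])%Z).

(* Natural power of a square matrix (without needing a ring structure on 'M_t). *)
Definition mxpow (R : pzRingType) (t : nat) (A : 'M[R]_t) (e : nat) : 'M[R]_t :=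
  iter e (mulmx A) 1%:M.

Definition mxpowz (R : fieldType) (t : nat) (A : 'M[R]_t) (z : int) : 'M[R]_t :=
  match z with
  | Posz e => mxpow A e
  | Negz e => mxpow (invmx A) e.+1
  end.

Definition in_Fq (L : fieldType) (q : nat) (x : L) : bool := x ^+ q == x.

Definition realizable2 (L : fieldType) (q t : nat) (A B : 'M[L]_t) : Prop :=
  exists P : 'M[L]_t, P \in unitmx /\
    (forall i j, in_Fq q ((invmx P *m A *m P) i j)) /\
    (forall i j, in_Fq q ((invmx P *m B *m P) i j)).

Definition rep_a (L : fieldType) (t : nat) (zeta : L) (k : int) : 'M[L]_t :=
  \matrix_(i < t, j < t) (if i == j then zeta ^ (k ^+ (i : nat)) else 0).

Definition rep_b (L : fieldType) (t : nat) (eta : L) (c : int) : 'M[L]_t :=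
  \matrix_(i < t, j < t)
    (if (i : nat) == (j : nat).+1 then 1
     else if ((i : nat) == 0%N) && ((j : nat) == t.-1) then eta ^ c else 0).

From HB Require Import structures.
From mathcomp Require Import all_boot all_order all_algebra all_field zify.
Import Order.TTheory GRing.Theory Num.Theory.
Local Open Scope ring_scope.
Set Implicit Arguments. Unset Strict Implicit. Unset Printing Implicit Defensive.

(* Let f be the Frobenius x |-> x^q, acting entrywise on matrices. As q = k^j
   modulo m, f(A) = B^-j A B^j; as eta lies in F_q, f(B) = B. So with M = B^j
   (j reduced modulo t) both generators satisfy X M = M f(X), and it suffices to
   find an invertible Q with f(Q) = Q M, because then Q X Q^-1 is fixed by f.
   Such a Q exists by a Lang-type argument: M^t is a nonzero scalar beta, so each
   of the q^t distinct roots y of the additive polynomial X^(q^t) - beta X gives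
   rows u = sum_l y^(q^l) e_i M^(t-l) with f(u) = u M, and a linear relation
   among all these rows would give a nonzero additive polynomial of degree
   below q^t vanishing at all those roots. *)

Definition frobenius_pow (L : fieldType) (p : nat) of p \in [pchar L] :=
  fun e (x : L) => x ^+ (p ^ e)%N.

Section FrobeniusPow.
Variables (L : fieldType) (p : nat) (chLp : p \in [pchar L]) (e : nat).

Lemma pchar_nat_expn : [pchar L].-nat (p ^ e)%N.
Proof. by rewrite pnatX pnatE ?chLp // (pcharf_prime chLp). Qed.

Lemma frobenius_pow_is_zmod_morphism : zmod_morphism (frobenius_pow chLp e).
Proof.
by move=> x y; rewrite /frobenius_pow exprDn_pchar ?exprNn_pchar ?pchar_nat_expn.
Qed.

Lemma frobenius_pow_is_monoid_morphism : monoid_morphism (frobenius_pow chLp e).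
Proof. by split=> [|x y]; rewrite /frobenius_pow ?expr1n ?exprMn. Qed.

HB.instance Definition _ := GRing.isZmodMorphism.Build L L
  (frobenius_pow chLp e) frobenius_pow_is_zmod_morphism.
HB.instance Definition _ := GRing.isMonoidMorphism.Build L L
  (frobenius_pow chLp e) frobenius_pow_is_monoid_morphism.

End FrobeniusPow.

Section MxPow.
Variables (R : pzRingType) (t : nat).
Implicit Types (X : 'M[R]_t).

Lemma mxpowS X p : mxpow X p.+1 = X *m mxpow X p. Proof. by []. Qed.

Lemma mxpowSr X p : mxpow X p.+1 = mxpow X p *m X.
Proof.
elim: p => [|p IH]; first by rewrite mxpowS mulmx1 mul1mx.
by rewrite [LHS]mxpowS {1}IH mulmxA -mxpowS.
Qed.

Lemma mxpowD X a b : mxpow X (a + b) = mxpow X a *m mxpow X b.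
Proof.
elim: a => [|a IH]; first by rewrite add0n mul1mx.
by rewrite addSn !mxpowS IH mulmxA.
Qed.

Lemma mxpowM X a b : mxpow X (a * b) = mxpow (mxpow X a) b.
Proof.
elim: b => [|b IH]; first by rewrite muln0.
by rewrite mulnS mxpowD IH.
Qed.

Lemma mxpow_scalar (a : R) p : mxpow (a%:M : 'M_t) p = (a ^+ p)%:M.
Proof.
elim: p => [|p IH]; first by rewrite expr0.
by rewrite mxpowS IH -scalar_mxM exprS.
Qed.

Lemma mxpow_diag (d : 'rV[R]_t) p :
  mxpow (diag_mx d) p = diag_mx (\row_i (d 0 i ^+ p)).
Proof.
elim: p => [|p IH]; first by apply/matrixP=> i j; rewrite !mxE expr0.
rewrite mxpowS IH mul_diag_mx; apply/matrixP=> i j.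
by rewrite !mxE exprS mulrnAr.
Qed.

Lemma map_mxpow (S : pzRingType) (f : {rmorphism R -> S}) X p :
  map_mx f (mxpow X p) = mxpow (map_mx f X) p.
Proof.
elim: p => [|p IH]; first exact: map_mx1.
by rewrite !mxpowS map_mxM IH.
Qed.

End MxPow.

Section MxPowField.
Variables (F : fieldType) (t : nat).
Implicit Types (X : 'M[F]_t).

Lemma unitmx_of_mxpow_scalar X p (a : F) :
  (0 < p)%N -> a != 0 -> mxpow X p = a%:M -> X \in unitmx.
Proof.
move=> p_gt0 a_neq0 Xp.
have XV : X *m (a^-1 *: mxpow X p.-1) = 1%:M.
  by rewrite -scalemxAr -mxpowS prednK // Xp -mul_scalar_mx -scalar_mxM mulVf.
by case: (mulmx1_unit XV).
Qed.

Lemma invmx_diag (d : 'rV[F]_t) : (forall i, d 0 i != 0) ->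
  invmx (diag_mx d) = diag_mx (\row_i (d 0 i)^-1).
Proof.
move=> d_neq0.
have dV : diag_mx d *m diag_mx (\row_i (d 0 i)^-1) = 1%:M.
  by rewrite mul_diag_mx; apply/matrixP=> i j; rewrite !mxE mulrnAr mulfV.
have [ud _] := mulmx1_unit dV.
by rewrite -[RHS](mulKmx ud) dV mulmx1.
Qed.

Lemma mxpowz_diag (d : 'rV[F]_t) (z : int) : (forall i, d 0 i != 0) ->
  mxpowz (diag_mx d) z = diag_mx (\row_i (d 0 i ^ z)).
Proof.
move=> d_neq0; case: z => [p|p]; rewrite /mxpowz.
  by rewrite mxpow_diag; apply/matrixP=> i j; rewrite !mxE exprnP.
rewrite invmx_diag // mxpow_diag; apply/matrixP=> i j; rewrite !mxE.
by rewrite exprVn NegzE.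
Qed.

End MxPowField.

Section RepB.
Variables (F : fieldType) (t : nat) (eta : F) (c : int).
Hypothesis t_gt0 : (0 < t)%N.
Local Notation B := (rep_b t eta c).

Lemma mxpow_rep_b p : (p <= t)%N -> mxpow B p =
  \matrix_(i, j) (if (i : nat) == (j + p)%N then 1
                  else if (i + t == j + p)%N then eta ^ c else 0).
Proof.
elim: p => [|p IH] p_le_t.
  apply/matrixP => i j; rewrite !mxE addn0 /= val_eqE.
  by case: eqP => // _; rewrite ifF //; have := ltn_ord j; lia.
rewrite mxpowS (IH (ltnW p_le_t)); apply/matrixP => i j; rewrite !mxE.
have j_lt_t := ltn_ord j.
case: i => [[|i] i_lt] /=.
  have last_lt_t : (t.-1 < t)%N by rewrite ltn_predL.
  rewrite (bigD1 (Ordinal last_lt_t)) //= big1 ?addr0 => [|l l_neq].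
    rewrite !mxE /= eqxx /=.
    by do ![case: eqP => /= ?]; rewrite ?mulr1 ?mulr0 //; lia.
  rewrite !mxE /= ifF ?mul0r //; apply: contraNF l_neq => /eqP l_last.
  exact/eqP/val_inj.
have i_lt_t : (i < t)%N by apply: ltnW.
rewrite (bigD1 (Ordinal i_lt_t)) //= big1 ?addr0 => [|l l_neq].
  by rewrite !mxE /= eqxx mul1r addnS addSn !eqSS.
rewrite !mxE /= eqSS ifF ?mul0r //; apply: contraNF l_neq => /eqP i_l.
exact/eqP/val_inj.
Qed.

Lemma mxpow_rep_b_order : mxpow B t = (eta ^ c)%:M.
Proof.
rewrite mxpow_rep_b //; apply/matrixP => i j; rewrite !mxE eqn_add2r val_eqE.
by rewrite ifF; [case: (i == j) | have := ltn_ord i; lia].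
Qed.

End RepB.

Lemma map_rep_b (F : fieldType) (f : {rmorphism F -> F}) (t : nat) (eta : F)
    (c : int) :
  f eta = eta -> map_mx f (rep_b t eta c) = rep_b t eta c.
Proof.
move=> f_eta; apply/matrixP => i j; rewrite !mxE.
case: ifP => _; first exact: rmorph1.
by case: ifP => _; [rewrite fmorphXz f_eta | exact: rmorph0].
Qed.

Section RootOfUnity.
Variables (F : fieldType) (m : nat) (zeta : F).
Hypotheses (m_gt0 : (0 < m)%N) (zeta_m : zeta ^+ m = 1).

Lemma unity_root_neq0 : zeta != 0.
Proof.
apply: contra_eq_neq zeta_m => ->.
by rewrite expr0n gtn_eqF // eq_sym oner_neq0.
Qed.

Lemma exprz_congr_mod (a b : int) : (a = b %[mod m%:Z])%Z -> zeta ^ a = zeta ^ b.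
Proof.
have zeta_mult u : zeta ^ (u * m%:Z) = 1.
  by rewrite mulrC -exprz_exp -exprnP zeta_m exp1rz.
move=> a_b; rewrite (divz_eq a m) (divz_eq b m) a_b.
by rewrite !expfzDr ?unity_root_neq0 // !zeta_mult.
Qed.

End RootOfUnity.

Definition rep_a_shift (F : fieldType) (t : nat) (zeta : F) (k : int) (p : nat) :
  'M[F]_t := diag_mx (\row_(i < t) zeta ^ (k ^+ (i + p)%N)).

Lemma rep_a_shift0 (F : fieldType) (t : nat) (zeta : F) (k : int) :
  rep_a t zeta k = rep_a_shift t zeta k 0.
Proof. by apply/matrixP => i j; rewrite !mxE addn0; case: (i == j). Qed.

Section RepA.
Variables (F : fieldType) (t m : nat) (k : int) (zeta : F).
Hypotheses (m_gt0 : (0 < m)%N) (zeta_m : zeta ^+ m = 1).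
Local Notation A := (rep_a t zeta k).
Local Notation Ash := (rep_a_shift t zeta k).

Lemma mxpow_rep_a_order : mxpow A m = 1%:M.
Proof.
rewrite rep_a_shift0 mxpow_diag; apply/matrixP => i j; rewrite !mxE.
by rewrite exprnP exprzAC -exprnP zeta_m exp1rz.
Qed.

Lemma mxpowz_rep_a : mxpowz A k = Ash 1.
Proof.
rewrite rep_a_shift0 mxpowz_diag => [|i]; last first.
  by rewrite mxE expfz_neq0 // (unity_root_neq0 m_gt0 zeta_m).
by apply/matrixP => i j; rewrite !mxE exprz_exp addn0 addn1 exprSr.
Qed.

Hypotheses (t_gt0 : (0 < t)%N) (k_t : (k ^+ t == 1 %[mod m%:Z])%Z).

Lemma exprk_mod_order a : (k ^+ a = k ^+ (a %% t) %[mod m%:Z])%Z.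
Proof.
rewrite {1}(divn_eq a t); elim: (a %/ t)%N => [|u IH]; first by rewrite mul0n add0n.
by rewrite mulSnr addnAC exprD -modzMmr (eqP k_t) modzMmr mulr1 IH.
Qed.

Lemma rep_a_shift_rep_b (eta : F) (c : int) p :
  Ash p *m rep_b t eta c = rep_b t eta c *m Ash p.+1.
Proof.
rewrite mul_diag_mx mul_mx_diag; apply/matrixP => i j; rewrite !mxE.
case: eqP => [->|_]; first by rewrite addSnnS mulr1 mul1r.
case: andP => [[/eqP -> /eqP ->]|_]; last by rewrite mulr0 mul0r.
rewrite add0n mulrC; congr (_ * _); apply: (exprz_congr_mod m_gt0 zeta_m).
by rewrite [RHS]exprk_mod_order [in RHS]addnS -addSn prednK // modnDl -exprk_mod_order.
Qed.

Lemma rep_a_shift_mxpow_rep_b (eta : F) (c : int) p e :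
  Ash p *m mxpow (rep_b t eta c) e = mxpow (rep_b t eta c) e *m Ash (p + e).
Proof.
elim: e p => [|e IH] p; first by rewrite addn0 mulmx1 mul1mx.
by rewrite mxpowS mulmxA rep_a_shift_rep_b -mulmxA IH mulmxA addSnnS.
Qed.

Lemma map_rep_a_expr (f : {rmorphism F -> F}) (q j : nat) :
  (forall x, f x = x ^+ q) -> (q%:Z = k ^+ j %[mod m%:Z])%Z ->
  map_mx f A = Ash (j %% t).
Proof.
move=> fE q_kj; rewrite rep_a_shift0; apply/matrixP => i l; rewrite !mxE rmorphMn fE.
congr (_ *+ _); rewrite exprnP exprz_exp; apply: (exprz_congr_mod m_gt0 zeta_m).
rewrite addn0 -modzMmr q_kj modzMmr -exprD exprk_mod_order.
by rewrite [in RHS]exprk_mod_order modnDmr.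
Qed.

End RepA.

Lemma uniq_roots_XnBZX (L : closedFieldType) (N : nat) (beta : L) :
  (1 < N)%N -> N%:R = 0 :> L -> beta != 0 ->
  exists rs : seq L,
    [/\ uniq rs, size rs = N & forall y, y \in rs -> y ^+ N = beta * y].
Proof.
move=> N_gt1 N_eq0 beta_neq0.
pose P : {poly L} := 'X^N - beta *: 'X.
have size_P : size P = N.+1.
  by rewrite size_polyDl ?size_polyXn // size_polyN size_scale // size_polyX.
have P_neq0 : P != 0 by rewrite -size_poly_eq0 size_P.
have lcP_neq0 : lead_coef P != 0 by rewrite lead_coef_eq0.
have [rs P_split] := closed_field_poly_normal P.
exists rs; split.
- rewrite -separable_prod_XsubC -(eqp_separable (eqp_scale _ lcP_neq0)) -P_split.
  rewrite unlock; apply: Pdiv.ClosedField.root_coprimep => z _.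
  (* the derivative of P is the nonzero constant -beta *)
  rewrite derivB derivXn derivZ derivX !hornerE hornerMn -mulr_natr N_eq0.
  by rewrite mulr0 sub0r oppr_eq0.
- by apply: succn_inj; rewrite -size_P {1}P_split size_scale // size_prod_XsubC.
- move=> y; rewrite -root_prod_XsubC -(rootZ _ _ lcP_neq0) -P_split.
  by rewrite /root !hornerE subr_eq0 => /eqP.
Qed.

Lemma additive_poly_coef1_eq0 (R : idomainType) (q t : nat) (g : nat -> R)
    (rs : seq R) :
  (1 < q)%N -> (0 < t)%N -> uniq rs -> size rs = (q ^ t)%N ->
  (forall y, y \in rs -> \sum_(0 <= l < t) g l * y ^+ (q ^ l) = 0) -> g 0%N = 0.
Proof.
move=> q_gt1 t_gt0 rs_uniq size_rs rs_roots.
pose P : {poly R} := \sum_(0 <= l < t) g l *: 'X^(q ^ l).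
have P_eq0 : P = 0.
  apply: (roots_geq_poly_eq0 _ rs_uniq).
    apply/allP => y /rs_roots y_root; rewrite /root horner_sum -[X in _ == X]y_root.
    by apply/eqP/eq_bigr => l _; rewrite hornerZ hornerXn.
  rewrite size_rs /P big_seq.
  apply: (big_ind (fun p : {poly R} => size p <= q ^ t)%N) => [|p1 p2 ? ?|l].
  - by rewrite size_poly0.
  - by apply: leq_trans (size_polyD _ _) _; rewrite geq_max; apply/andP.
  rewrite mem_index_iota => /andP[_ l_lt_t].
  by apply: leq_trans (size_scale_leq _ _) _; rewrite size_polyXn ltn_exp2l.
have := congr1 (fun p : {poly R} => p`_1) P_eq0.
rewrite coef0 coef_sum big_ltn // coefZ coefXn expn0 eqxx mulr1 => <-.
rewrite big_nat_cond big1 ?addr0 // => l /andP[/andP[l_gt0 _] _].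
by rewrite coefZ coefXn eq_sym gtn_eqF ?mulr0 // -{1}(expn0 q) ltn_exp2l.
Qed.

Lemma big_nat_shift_wrap (V : nmodType) (F : nat -> nat -> V) (t : nat) :
  (0 < t)%N -> F t 1%N = F 0%N t.+1 ->
  \sum_(0 <= l < t) F l.+1 (t - l)%N = \sum_(0 <= l < t) F l (t - l).+1.
Proof.
case: t => // t _ F_wrap.
rewrite big_nat_recr //= big_nat_recl //= subSnn F_wrap subn0 addrC; congr (_ + _).
rewrite big_nat_cond [RHS]big_nat_cond; apply: eq_bigr => l /andP[/andP[_ l_lt] _].
by rewrite subSS subSn // ltnW.
Qed.

Section FrobeniusDescent.
Variables (L : closedFieldType) (f : {rmorphism L -> L}) (q t : nat).
Hypotheses (q_gt1 : (1 < q)%N) (fE : forall x, f x = x ^+ q) (q_eq0 : q%:R = 0 :> L).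
Hypothesis t_gt0 : (0 < t)%N.
Variables (M : 'M[L]_t) (beta : L).
Hypotheses (fM : map_mx f M = M) (M_t : mxpow M t = beta%:M) (beta_neq0 : beta != 0).

Definition twisted_vec (y : L) (i : 'I_t) : 'rV[L]_t :=
  \sum_(0 <= l < t) y ^+ (q ^ l) *: row i (mxpow M (t - l)).

Lemma map_twisted_vec y i : y ^+ (q ^ t) = beta * y ->
  map_mx f (twisted_vec y i) = twisted_vec y i *m M.
Proof.
move=> y_root; rewrite /twisted_vec raddf_sum /= mulmx_suml.
under eq_bigr => l _ do rewrite map_mxZ map_row map_mxpow fM fE -exprM -expnSr.
under [RHS]eq_bigr => l _ do rewrite -scalemxAl -row_mul -mxpowSr.
apply: (big_nat_shift_wrap (F := fun l e => y ^+ (q ^ l) *: row i (mxpow M e))) => //.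
rewrite y_root expn0 expr1 [mxpow M t.+1]mxpowSr M_t mul_scalar_mx.
by rewrite mxpowS mulmx1 linearZ /= scalerA mulrC.
Qed.

Lemma dot_twisted_vec (v : 'rV[L]_t) y i :
  \sum_(c < t) v 0 c * twisted_vec y i 0 c =
  \sum_(0 <= l < t) (\sum_(c < t) mxpow M (t - l) i c * v 0 c) * y ^+ (q ^ l).
Proof.
under eq_bigr => c _ do rewrite /twisted_vec summxE big_distrr.
rewrite exchange_big /=; apply: eq_bigr => l _.
rewrite mulr_suml; apply: eq_bigr => c _.
by rewrite !mxE mulrCA mulrC (mulrC (v 0 c)).
Qed.

Variable rs : seq L.
Hypotheses (rs_uniq : uniq rs) (size_rs : size rs = (q ^ t)%N)
  (rs_roots : forall y, y \in rs -> y ^+ (q ^ t) = beta * y).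

Lemma orthogonal_twisted_vecs_eq0 (v : 'rV[L]_t) :
  (forall y i, y \in rs -> \sum_(c < t) v 0 c * twisted_vec y i 0 c = 0) -> v = 0.
Proof.
move=> v_orth; apply/rowP => i; rewrite mxE.
pose g l := \sum_(c < t) mxpow M (t - l) i c * v 0 c.
have g0 : g 0%N = 0.
  apply: (@additive_poly_coef1_eq0 _ q t g rs q_gt1 t_gt0 rs_uniq size_rs) => y y_rs.
  by rewrite -[RHS](v_orth y i y_rs) dot_twisted_vec.
move: g0; rewrite /g subn0 M_t (bigD1 i) //= big1 => [|c c_neq_i].
  by rewrite !mxE eqxx mulr1n addr0 => /eqP; rewrite mulf_eq0 (negbTE beta_neq0) => /eqP.
by rewrite !mxE eq_sym (negbTE c_neq_i) mulr0n mul0r.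
Qed.

Let I := ('I_t * 'I_(size rs))%type.

Definition twisted_vecs : 'M[L]_(#|{:I}|, t) :=
  \matrix_(p < #|{:I}|) twisted_vec rs`_(enum_val p).2 (enum_val p).1.

Lemma rank_twisted_vecs : \rank twisted_vecs = t.
Proof.
apply/eqP; rewrite eqn_leq rank_leq_col /= leqNgt; apply/negP => rank_lt.
have [a ker_a] : exists a, row a (kermx twisted_vecs^T) != 0.
  apply/existsP; apply: contraTT rank_lt => /existsPn ker0.
  rewrite -leqNgt -subn_eq0 -mxrank_tr -mxrank_ker mxrank_eq0.
  by apply/eqP/row_matrixP => a; rewrite row0; apply/eqP/negbNE/ker0.
apply/negP: ker_a; apply/negPn/eqP/orthogonal_twisted_vecs_eq0 => y i y_rs.
have y_idx : (index y rs < size rs)%N by rewrite index_mem.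
pose p := enum_rank ((i, Ordinal y_idx) : I).
have /rowP/(_ p) := sub_kermxP (row_sub a (kermx twisted_vecs^T)).
rewrite !mxE => dot_eq0; rewrite -[RHS]dot_eq0; apply: eq_bigr => c _.
by rewrite !mxE enum_rankK /= nth_index.
Qed.

Lemma exists_map_mx_eq_mulmx : exists Q : 'M[L]_t, Q \in unitmx /\ map_mx f Q = Q *m M.
Proof.
have [g g_unit] : exists g : 'I_t -> 'I_#|{:I}|, rowsub g twisted_vecs \in unitmx.
  have := maxrowsub_free twisted_vecs; move: (maxrankfun twisted_vecs).
  by rewrite rank_twisted_vecs => g g_free; exists g; rewrite -row_free_unit.
exists (rowsub g twisted_vecs); split => //.
apply/row_matrixP => a; rewrite -map_row row_mul !row_rowsub rowK.
by rewrite map_twisted_vec // rs_roots // mem_nth.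
Qed.

End FrobeniusDescent.

Lemma map_mx_conj_fixed (F : fieldType) (f : {rmorphism F -> F}) t (Q M X : 'M[F]_t) :
  Q \in unitmx -> M \in unitmx -> map_mx f Q = Q *m M ->
  X *m M = M *m map_mx f X ->
  map_mx f (Q *m X *m invmx Q) = Q *m X *m invmx Q.
Proof.
move=> Q_unit M_unit fQ XM.
have QM_unit : Q *m M \in unitmx by rewrite unitmx_mul Q_unit.
apply: (can_inj (mulmxK QM_unit)); rewrite -[in LHS]fQ -map_mxM mulmxKV //.
by rewrite map_mxM fQ -[LHS]mulmxA -XM mulmxA (mulmxA _ Q) mulmxKV.
Qed.

Lemma realizable2_of_frobenius_twist (L : closedFieldType)
    (f : {rmorphism L -> L}) (q t : nat) (M A B : 'M[L]_t) (beta : L) :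
  (1 < q)%N -> (forall x, f x = x ^+ q) -> q%:R = 0 :> L -> (0 < t)%N ->
  map_mx f M = M -> mxpow M t = beta%:M -> beta != 0 ->
  A *m M = M *m map_mx f A -> B *m M = M *m map_mx f B -> realizable2 q A B.
Proof.
move=> q_gt1 fE q_eq0 t_gt0 fM M_t beta_neq0 AM BM.
have M_unit := unitmx_of_mxpow_scalar t_gt0 beta_neq0 M_t.
have [rs [rs_uniq size_rs rs_roots]] : exists rs : seq L,
    [/\ uniq rs, size rs = (q ^ t)%N & forall y, y \in rs -> y ^+ (q ^ t) = beta * y].
  apply: uniq_roots_XnBZX => //; first by rewrite -(expn0 q) ltn_exp2l.
  by rewrite natrX q_eq0 expr0n gtn_eqF.
have [Q [Q_unit fQ]] := exists_map_mx_eq_mulmx q_gt1 fE t_gt0 fM M_t beta_neq0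
  rs_uniq size_rs rs_roots.
have fixed X : X *m M = M *m map_mx f X -> forall i j, in_Fq q ((Q *m X *m invmx Q) i j).
  move=> XM i j; apply/eqP; rewrite -fE.
  by rewrite -{2}(map_mx_conj_fixed Q_unit M_unit fQ XM) [RHS]mxE.
by exists (invmx Q); rewrite unitmx_inv invmxK; split; [|split; apply: fixed].
Qed.

Theorem theorem4p5
  (m n : nat) (k : int) (t r : nat)
  (hm : (1 <= m)%N) (hn : (1 <= n)%N)
  (hkn : (k ^+ n == 1 %[mod m%:Z])%Z)
  (ht : is_mult_order k m t) (hnrt : n = (r * t)%N)
  (s : nat) (hs : prime s) (hsm : coprime s m)
  (L : closedFieldType) (hchar : s \in [pchar L])
  (halg : forall x : L, exists e : nat, (0 < e)%N /\ x ^+ (s ^ e) = x)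
  (zeta : L) (hzeta : m.-primitive_root zeta)
  (q e : nat) (he : (0 < e)%N) (hq : q = (s ^ e)%N)
  (j : nat) (hqk : ((q%:Z) == k ^+ j %[mod m%:Z])%Z)
  (eta : L) (heta_F : in_Fq q eta) (heta : r.-primitive_root eta)
  (c : int) :
  let A := rep_a t zeta k in
  let B := rep_b t eta c in
  [/\ mxpow A m = 1%:M, mxpow B n = 1%:M,
      B \in unitmx, invmx B *m A *m B = mxpowz A k
    & realizable2 q A B].
Proof.
move=> A B; have [t_gt0 [k_t _]] := ht.
have zeta_m : zeta ^+ m = 1 := prim_expr_order hzeta.
have eta_r : eta ^+ r = 1 := prim_expr_order heta.
have r_gt0 : (0 < r)%N by move: hn; rewrite hnrt muln_gt0 => /andP[].
have etac_neq0 : eta ^ c != 0 by rewrite expfz_neq0 ?(unity_root_neq0 r_gt0 eta_r).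
have B_t : mxpow B t = (eta ^ c)%:M := mxpow_rep_b_order eta c t_gt0.
have B_unit : B \in unitmx := unitmx_of_mxpow_scalar t_gt0 etac_neq0 B_t.
split => //.
- exact: mxpow_rep_a_order.
- by rewrite hnrt mulnC mxpowM B_t mxpow_scalar exprnP exprzAC -exprnP eta_r exp1rz.
- rewrite (mxpowz_rep_a _ _ hm zeta_m) /A rep_a_shift0 -mulmxA.
  by rewrite (rep_a_shift_rep_b hm zeta_m t_gt0 k_t) mulKmx.
pose f : {rmorphism L -> L} := frobenius_pow hchar e.
have fE x : f x = x ^+ q by rewrite hq.
have fB : map_mx f B = B by rewrite map_rep_b // fE (eqP heta_F).
apply: (@realizable2_of_frobenius_twist _ f q t (mxpow B (j %% t))
  _ _ ((eta ^ c) ^+ (j %% t))) => //.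
- by rewrite hq -(expn0 s) ltn_exp2l ?prime_gt1.
- by rewrite hq natrX (pcharf0 hchar) expr0n gtn_eqF.
- by rewrite map_mxpow fB.
- by rewrite -mxpowM mulnC mxpowM B_t mxpow_scalar.
- exact: expf_neq0.
- rewrite (map_rep_a_expr hm zeta_m k_t fE (eqP hqk)) /A rep_a_shift0.
  by rewrite (rep_a_shift_mxpow_rep_b hm zeta_m t_gt0 k_t).
- by rewrite fB -mxpowSr.
Qed.
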